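(* For $n\geq1$ let $\sigma(n)$ denote the set of eigenvalues of the adjacency matrix of the connected anti-regular graph with loops $G_n$ on $n$ vertices. Then the closure of $\bigcup_{n\geq1}\sigma(n)$ in $\mathbb R$ is $(-\infty,-\tfrac12]\cup[\tfrac12,\infty)$.
   Context: A graph with loops is a pair $(V,E)$ with $E$ a set of 2-element multisets of $V$ (loops allowed, at most one per vertex, no multiple edges); the degree of a vertex counts a loop once. An anti-regular graph with loops is one in which all vertex degrees are distinct; $G_n$ denotes the unique (up to isomorphism) connected one on $n$ vertices, whose degree sequence is $(1,2,\ldots,n)$. Its adjacency matrix has diagonal entry $1$ exactly at vertices with a loop. *)

From Stdlib Require Import Reals List Arith.
Open Scope R_scope.

(* Vertices of G_n are 0,...,n-1.  The connected anti-regular graph with loops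
   G_n: vertices i and j (0-indexed) are adjacent iff i + j >= n - 1
   (1-indexed: i + j >= n + 1).  Vertex i then has exactly i+1 neighbours
   (a loop counted once), so the degree sequence is (1,2,...,n); vertex n-1 is
   adjacent to every vertex, so G_n is connected. *)
Definition Gn_edge (n i j : nat) : bool := Nat.leb n (i + j + 1).

Definition Gn_adj (n i j : nat) : R := if Gn_edge n i j then 1 else 0.

Definition sum_upto (n : nat) (f : nat -> R) : R :=
  fold_right Rplus 0 (map f (seq 0 n)).

Definition is_eigenvalue (n : nat) (M : nat -> nat -> R) (lambda : R) : Prop :=
  exists v : nat -> R,
    (exists i, (i < n)%nat /\ v i <> 0) /\
    forall i, (i < n)%nat -> sum_upto n (fun j => M i j * v j) = lambda * v i.

Definition sigma (n : nat) (lambda : R) : Prop := is_eigenvalue n (Gn_adj n) lambda.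

Definition sigma_union (lambda : R) : Prop := exists n, (1 <= n)%nat /\ sigma n lambda.

From Pilot Require Import Defs.
From Stdlib Require Import Reals Rtopology.
From Stdlib Require Import Lra Lia List.
Open Scope R_scope.

(* The row of vertex i of G_n is the indicator of the columns j >= n-1-i, so
   consecutive rows differ by a unit vector.  For an eigenvector v with
   eigenvalue lambda this gives lambda (v_(i+1) - v_i) = v_(n-2-i) and
   lambda v_0 = v_(n-1); the equation whose right side is the largest |v_m|
   yields |v_m| <= 2 |lambda| |v_m|, so |lambda| >= 1/2.
   Conversely, for phi = (2k+1) pi / (4n+2) with k < n, telescoping the row
   sums shows that v_j = sin (2 phi (j+1)) is an eigenvector with eigenvalue
   (-1)^k / (2 sin phi).  For k of fixed parity these angles have mesh
   2 pi / (2n+1) in (0, pi/2), and phi |-> 1 / (2 sin phi) maps (0, pi/2]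
   continuously onto [1/2, oo). *)

Lemma adherence_Rabs (D : R -> Prop) (x : R) :
  adherence D x <-> forall d, 0 < d -> exists y, D y /\ Rabs (y - x) < d.
Proof.
  split.
  - intros Had d Hd.
    destruct (Had (disc x (mkposreal d Hd))) as [y [Hxy Hy]].
    + exists (mkposreal d Hd). intros z Hz. exact Hz.
    + exists y. split; [exact Hy | exact Hxy].
  - intros Hnear V [d Hincl].
    destruct (Hnear d (cond_pos d)) as [y [Hy Hxy]].
    exists y. split; [apply Hincl; exact Hxy | exact Hy].
Qed.

Lemma continuity_pt_Rabs (f : R -> R) (x0 eps : R) :
  continuity_pt f x0 -> 0 < eps ->
  exists eta, 0 < eta /\ forall x, Rabs (x - x0) < eta -> Rabs (f x - f x0) < eps.
Proof.
  intros Hf Heps. destruct (Hf eps Heps) as [eta [Heta Hball]].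
  exists eta. split; [exact Heta|]. intros x Hx.
  destruct (Req_dec x x0) as [->|Hne].
  - unfold Rminus. rewrite Rplus_opp_r, Rabs_R0. exact Heps.
  - apply (Hball x). split; [split; [exact I | congruence] | exact Hx].
Qed.

Lemma Rabs_argmax (n : nat) (f : nat -> R) : (0 < n)%nat ->
  exists m, (m < n)%nat /\ forall j, (j < n)%nat -> Rabs (f j) <= Rabs (f m).
Proof.
  induction n as [|n IHn]; intros Hn; [lia|].
  destruct (Nat.eq_dec n 0) as [->|Hn0].
  - exists 0%nat. split; [lia|]. intros j Hj. replace j with 0%nat by lia. lra.
  - destruct IHn as [m [Hm Hmax]]; [lia|].
    destruct (Rle_dec (Rabs (f m)) (Rabs (f n))).
    + exists n. split; [lia|]. intros j Hj.
      destruct (Nat.eq_dec j n) as [->|]; [lra|].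
      specialize (Hmax j ltac:(lia)). lra.
    + exists m. split; [lia|]. intros j Hj.
      destruct (Nat.eq_dec j n) as [->|]; [lra|].
      apply Hmax. lia.
Qed.

Lemma nat_floor_lt (a y : R) : 0 < a -> 0 < y ->
  exists m : nat, INR m * a < y <= (INR m + 1) * a.
Proof.
  intros Ha Hy. destruct (INR_archimed a y Ha) as [N HN].
  apply Rgt_lt, Rlt_le in HN. induction N as [|N IHN].
  - simpl in HN. lra.
  - destruct (Rle_dec y (INR N * a)) as [Hle|Hgt].
    + exact (IHN Hle).
    + exists N. rewrite S_INR in HN. lra.
Qed.

Lemma sum_upto_S (n : nat) (f : nat -> R) :
  sum_upto (S n) f = sum_upto n f + f n.
Proof.
  unfold sum_upto. rewrite seq_S, map_app, fold_right_app. simpl.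
  generalize (map f (seq 0 n)). intros l.
  induction l as [|a l IHl]; simpl; [ring | rewrite IHl; ring].
Qed.

Lemma sum_upto_ext (n : nat) (f g : nat -> R) :
  (forall j, (j < n)%nat -> f j = g j) -> sum_upto n f = sum_upto n g.
Proof.
  induction n as [|n IHn]; intros Hfg; [reflexivity|].
  rewrite !sum_upto_S, Hfg by lia. f_equal.
  apply IHn. intros j Hj. apply Hfg. lia.
Qed.

Lemma sum_upto_from (n k : nat) (f : nat -> R) :
  sum_upto n (fun j => if Nat.leb k j then f j else 0)
  = sum_upto n f - sum_upto (Nat.min k n) f.
Proof.
  induction n as [|n IHn].
  - rewrite Nat.min_0_r. unfold sum_upto. simpl. ring.
  - rewrite !sum_upto_S, IHn. destruct (Nat.leb_spec k n).
    + rewrite !Nat.min_l by lia. ring.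
    + rewrite !Nat.min_r by lia. rewrite sum_upto_S. ring.
Qed.

Lemma Gn_row_sum (n i : nat) (v : nat -> R) : (i < n)%nat ->
  sum_upto n (fun j => Gn_adj n i j * v j) = sum_upto n v - sum_upto (n - 1 - i) v.
Proof.
  intros Hi.
  rewrite (sum_upto_ext _ _ (fun j => if Nat.leb (n - 1 - i) j then v j else 0)).
  - rewrite sum_upto_from, Nat.min_l by lia. reflexivity.
  - intros j Hj. unfold Gn_adj, Gn_edge.
    destruct (Nat.leb_spec n (i + j + 1)), (Nat.leb_spec (n - 1 - i) j);
      try lia; ring.
Qed.

Section EigenvectorRows.

Variables (n : nat) (lambda : R) (v : nat -> R).
Hypothesis eigen_eq : forall i, (i < n)%nat ->
  sum_upto n (fun j => Gn_adj n i j * v j) = lambda * v i.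

Lemma Gn_eigen_first_row : (0 < n)%nat -> lambda * v 0%nat = v (n - 1)%nat.
Proof.
  intros Hn. rewrite <- eigen_eq, Gn_row_sum by exact Hn.
  replace n with (S (n - 1)) at 1 by lia. rewrite sum_upto_S.
  replace (n - 1 - 0)%nat with (n - 1)%nat by lia. ring.
Qed.

Lemma Gn_eigen_row_step (i : nat) : (S i < n)%nat ->
  lambda * (v (S i) - v i) = v (n - 2 - i)%nat.
Proof.
  intros Hi. rewrite Rmult_minus_distr_l, <- !eigen_eq, !Gn_row_sum by lia.
  replace (n - 1 - i)%nat with (S (n - 2 - i)) by lia. rewrite sum_upto_S.
  replace (n - 1 - S i)%nat with (n - 2 - i)%nat by lia. ring.
Qed.

End EigenvectorRows.

(* [Defs.sigma] is qualified because Reals exports a [sigma] of its own. *)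
Lemma sigma_abs_ge_half (n : nat) (lambda : R) :
  Defs.sigma n lambda -> 1/2 <= Rabs lambda.
Proof.
  intros [v [[i0 [Hi0 Hv0]] Hev]].
  destruct (Rabs_argmax n v) as [m [Hm Hmax]]; [lia|].
  assert (Hvm : 0 < Rabs (v m)).
  { specialize (Hmax i0 Hi0). pose proof (Rabs_pos_lt _ Hv0). lra. }
  pose proof (Rabs_pos lambda).
  destruct (Nat.eq_dec m (n - 1)) as [->|Hm1].
  - assert (Hrow : Rabs (v (n - 1)%nat) = Rabs lambda * Rabs (v 0%nat)).
    { rewrite <- Rabs_mult, (Gn_eigen_first_row n lambda v Hev) by lia. reflexivity. }
    specialize (Hmax 0%nat ltac:(lia)). nra.
  - set (i := (n - 2 - m)%nat).
    assert (Hrow : Rabs (v m) = Rabs lambda * Rabs (v (S i) - v i)).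
    { rewrite <- Rabs_mult, (Gn_eigen_row_step n lambda v Hev i) by lia.
      f_equal. f_equal. unfold i. lia. }
    pose proof (Rabs_triang (v (S i)) (- v i)). rewrite Rabs_Ropp in *.
    pose proof (Hmax (S i) ltac:(lia)). pose proof (Hmax i ltac:(lia)).
    assert (Rabs (v (S i) - v i) <= 2 * Rabs (v m)) by (unfold Rminus; lra).
    nra.
Qed.

Lemma sigma_union_abs_ge_half (y : R) : sigma_union y -> 1/2 <= Rabs y.
Proof. intros [n [_ Hy]]. exact (sigma_abs_ge_half n y Hy). Qed.

Lemma sin_telescope (phi : R) (N : nat) :
  2 * sin phi * sum_upto N (fun j => sin (2 * phi * (INR j + 1)))
  = cos phi - cos (phi * (2 * INR N + 1)).
Proof.
  induction N as [|N IHN].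
  - unfold sum_upto. simpl. replace (phi * (2 * 0 + 1)) with phi by ring. ring.
  - rewrite sum_upto_S, Rmult_plus_distr_l, IHN, S_INR.
    replace (phi * (2 * INR N + 1)) with (2 * phi * (INR N + 1) - phi) by ring.
    replace (phi * (2 * (INR N + 1) + 1)) with (2 * phi * (INR N + 1) + phi) by ring.
    rewrite cos_minus, cos_plus. ring.
Qed.

Lemma cos_odd_half_pi_sub (k : nat) (y : R) :
  cos ((2 * INR k + 1) * PI / 2 - y) = (-1) ^ k * sin y.
Proof.
  induction k as [|k IHk].
  - simpl. replace ((2 * 0 + 1) * PI / 2 - y) with (PI / 2 - y) by field.
    rewrite cos_shift. ring.
  - rewrite S_INR.
    replace ((2 * (INR k + 1) + 1) * PI / 2 - y)
      with ((2 * INR k + 1) * PI / 2 - y + PI) by field.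
    rewrite neg_cos, IHk. simpl. ring.
Qed.

Definition Gn_angle (n k : nat) : R := (2 * INR k + 1) * PI / (4 * INR n + 2).

Lemma Gn_angle_bounds (n k : nat) : (k < n)%nat -> 0 < Gn_angle n k < PI / 2.
Proof.
  intros Hk. pose proof PI_RGT_0. pose proof (pos_INR k).
  assert (Hkn : INR k + 1 <= INR n) by (rewrite <- S_INR; apply le_INR; lia).
  unfold Gn_angle. split.
  - apply Rdiv_lt_0_compat; nra.
  - apply (Rmult_lt_reg_r (4 * INR n + 2)); [lra|].
    field_simplify; nra.
Qed.

Lemma Gn_sine_eigenvalue (n k : nat) : (k < n)%nat ->
  Defs.sigma n ((-1) ^ k / (2 * sin (Gn_angle n k))).
Proof.
  intros Hk. set (phi := Gn_angle n k).
  destruct (Gn_angle_bounds n k Hk) as [Hphi0 Hphi1]. fold phi in Hphi0, Hphi1.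
  assert (Hsin : 0 < sin phi) by (apply sin_gt_0; lra).
  assert (Hcorner : phi * (2 * INR n + 1) = (2 * INR k + 1) * PI / 2).
  { unfold phi, Gn_angle. field. pose proof (pos_INR n). lra. }
  exists (fun j => sin (2 * phi * (INR j + 1))). split.
  - exists 0%nat. split; [lia|]. simpl. rewrite Rplus_0_l, Rmult_1_r.
    apply Rgt_not_eq, sin_gt_0; lra.
  - intros i Hi. rewrite Gn_row_sum by exact Hi.
    apply (Rmult_eq_reg_l (2 * sin phi)); [|lra].
    rewrite Rmult_minus_distr_l, !sin_telescope, Hcorner.
    assert (Hrow : phi * (2 * INR (n - 1 - i) + 1)
                   = (2 * INR k + 1) * PI / 2 - 2 * phi * (INR i + 1)).
    { rewrite <- Hcorner, !minus_INR by lia. simpl. ring. }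
    assert (Hzero : cos ((2 * INR k + 1) * PI / 2) = 0).
    { rewrite <- (Rminus_0_r ((2 * INR k + 1) * PI / 2)), cos_odd_half_pi_sub, sin_0.
      ring. }
    rewrite Hrow, cos_odd_half_pi_sub, Hzero. field. lra.
Qed.

Lemma Gn_angle_dense (p : nat) (phi0 eta : R) : 0 < phi0 <= PI / 2 -> 0 < eta ->
  exists n m, (2 * m + p < n)%nat /\ Rabs (Gn_angle n (2 * m + p) - phi0) < eta.
Proof.
  intros Hphi0 Heta. pose proof PI_RGT_0. pose proof (pos_INR p).
  set (mu := Rmin phi0 eta).
  assert (Hmu : 0 < mu) by (apply Rmin_pos; lra).
  destruct (INR_archimed mu ((2 * INR p + 5) * PI) Hmu) as [n Hn].
  pose proof (pos_INR n).
  (* Admissible angles are odd multiples (4m+2p+1) h; the factor 2p+5 makes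
     both (2p+1) h < phi0 and the mesh 4 h < eta.  Rounding phi0 down strictly
     keeps the angle below pi/2 = (2n+1) h, i.e. 2m+p < n. *)
  set (h := PI / (4 * INR n + 2)).
  assert (Hh : 0 < h) by (apply Rdiv_lt_0_compat; lra).
  assert (Hmesh : (2 * INR p + 5) * h < mu).
  { apply (Rmult_lt_reg_r (4 * INR n + 2)); [lra|].
    replace ((2 * INR p + 5) * h * (4 * INR n + 2)) with ((2 * INR p + 5) * PI)
      by (unfold h; field; lra).
    nra. }
  assert (Hmu1 : mu <= phi0) by apply Rmin_l.
  assert (Hmu2 : mu <= eta) by apply Rmin_r.
  destruct (nat_floor_lt (4 * h) (phi0 - (2 * INR p + 1) * h)) as [m [Hm1 Hm2]];
    [lra | nra |].
  assert (Hangle : Gn_angle n (2 * m + p) = (4 * INR m + 2 * INR p + 1) * h).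
  { unfold Gn_angle, h. rewrite plus_INR, mult_INR. simpl. field. lra. }
  assert (Hhalf : PI / 2 = (2 * INR n + 1) * h) by (unfold h; field; lra).
  exists n, m. split.
  - destruct (Nat.lt_ge_cases (2 * m + p) n) as [|Hge]; [assumption|].
    apply le_INR in Hge. rewrite plus_INR, mult_INR in Hge. simpl in Hge. nra.
  - rewrite Hangle, Rabs_left by nra. nra.
Qed.

Lemma sigma_union_near_signed_inv_sin (p : nat) (phi0 d : R) :
  0 < phi0 <= PI / 2 -> 0 < d ->
  exists y, sigma_union y /\ Rabs (y - (-1) ^ p / (2 * sin phi0)) < d.
Proof.
  intros Hphi0 Hd. pose proof PI_RGT_0.
  assert (Hsin : 0 < sin phi0) by (apply sin_gt_0; lra).
  assert (Hcont : continuity_pt (fun phi => / (2 * sin phi)) phi0) by (reg; lra).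
  destruct (continuity_pt_Rabs _ phi0 d Hcont Hd) as [eta [Heta Hball]].
  destruct (Gn_angle_dense p phi0 eta Hphi0 Heta) as [n [m [Hk Hclose]]].
  set (phi := Gn_angle n (2 * m + p)) in *.
  exists ((-1) ^ (2 * m + p) / (2 * sin phi)). split.
  - exists n. split; [lia|]. exact (Gn_sine_eigenvalue n (2 * m + p) Hk).
  - rewrite pow_add, pow_1_even, Rmult_1_l.
    replace ((-1) ^ p / (2 * sin phi) - (-1) ^ p / (2 * sin phi0))
      with ((-1) ^ p * (/ (2 * sin phi) - / (2 * sin phi0))) by (unfold Rdiv; ring).
    rewrite Rabs_mult, pow_1_abs, Rmult_1_l. exact (Hball phi Hclose).
Qed.

Lemma signed_inv_sin_onto (x : R) : 1/2 <= Rabs x ->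
  exists p phi0, 0 < phi0 <= PI / 2 /\ x = (-1) ^ p / (2 * sin phi0).
Proof.
  intros Hx. pose proof PI_RGT_0.
  assert (Hx0 : x <> 0) by (intros ->; rewrite Rabs_R0 in Hx; lra).
  set (c := / (2 * Rabs x)).
  assert (Hc : 0 < c <= 1).
  { unfold c. split; [apply Rinv_0_lt_compat; lra|].
    rewrite <- Rinv_1. apply Rinv_le_contravar; lra. }
  assert (Hsin : sin (asin c) = c) by (apply sin_asin; lra).
  pose proof (asin_bound c) as Hbound.
  assert (Hpos : 0 < asin c).
  { destruct (Rtotal_order (asin c) 0) as [Hneg|[Hzero|]]; [|exfalso|assumption].
    - pose proof (sin_lt_0_var (asin c) ltac:(lra) Hneg). lra.
    - rewrite Hzero, sin_0 in Hsin. lra. }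
  exists (if Rle_dec 0 x then 0%nat else 1%nat), (asin c).
  split; [lra|]. rewrite Hsin. unfold c.
  destruct (Rle_dec 0 x).
  - rewrite Rabs_right by lra. simpl. field. exact Hx0.
  - rewrite Rabs_left by lra. simpl. field. exact Hx0.
Qed.

Theorem mainTheorem8 :
  forall x : R, adherence sigma_union x <-> (x <= - (1/2) \/ 1/2 <= x).
Proof.
  intros x. rewrite adherence_Rabs.
  assert (Habs : 1/2 <= Rabs x <-> x <= - (1/2) \/ 1/2 <= x)
    by (unfold Rabs; destruct (Rcase_abs x); split; intros; lra).
  rewrite <- Habs. split.
  - intros Hnear. apply Rnot_lt_le. intros Hsmall.
    destruct (Hnear (1/2 - Rabs x)) as [y [Hy Hxy]]; [lra|].
    pose proof (sigma_union_abs_ge_half y Hy).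
    pose proof (Rabs_triang (y - x) x). replace (y - x + x) with y in * by ring.
    lra.
  - intros Hx d Hd.
    destruct (signed_inv_sin_onto x Hx) as [p [phi0 [Hphi0 ->]]].
    exact (sigma_union_near_signed_inv_sin p phi0 d Hphi0 Hd).
Qed.
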